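(* Let $\sigma>0$ and let $\mu_1,\dots,\mu_n,\mu_1^*,\dots,\mu_n^*\in\mathbb{R}$. Let $X_1,\dots,X_n$ be independent random variables with $X_i\sim \mathrm{Gum}(\mu_i,\sigma)$, and let $Y_1,\dots,Y_n$ be independent random variables with $Y_i\sim \mathrm{Gum}(\mu_i^*,\sigma)$, $i=1,\dots,n$. Let $X_{n:n}=\max\{X_1,\dots,X_n\}$ and $Y_{n:n}=\max\{Y_1,\dots,Y_n\}$. If $\mu_i\geq \mu_i^*$ for all $i=1,\dots,n$, then $X_{n:n}\geq_{lr} Y_{n:n}$.
   Context: A random variable $X$ is said to have the Gumbel distribution $\mathrm{Gum}(\mu,\sigma)$ (location $\mu\in\mathbb{R}$, scale $\sigma>0$) if its cumulative distribution function is $F(x)=e^{-e^{-(x-\mu)/\sigma}}$, $x\in\mathbb{R}$. For continuous random variables $X,Y$ with densities $f_X,f_Y$, $X\leq_{lr}Y$ (likelihood ratio order) means that $f_Y(x)/f_X(x)$ is increasing in $x$; $X\geq_{lr}Y$ means $Y\leq_{lr}X$. *)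

From HB Require Import structures.
From mathcomp Require Import all_boot all_order all_algebra.
From mathcomp Require Import all_classical all_reals all_analysis.
Set Implicit Arguments. Unset Strict Implicit. Unset Printing Implicit Defensive.
Import Order.TTheory GRing.Theory Num.Theory.
Import numFieldNormedType.Exports.
Local Open Scope classical_set_scope.
Local Open Scope ring_scope.

(* Mutual independence of a finite family of real random variables:
   the joint law of (X_i)_i is the product of the marginals on measurable boxes
   (taking B_i = setT recovers every subfamily). *)
Definition mutually_independent {d} {T : measurableType d} {R : realType}
  (P : probability T R) (n : nat) (X : 'I_n -> T -> R) : Prop :=
  forall B : 'I_n -> set R, (forall i, measurable (B i)) ->
    P (\bigcap_i (X i @^-1` B i)) = (\prod_(i < n) P (X i @^-1` B i))%E.

Definition gumbel_cdf {R : realType} (mu sigma x : R) : R :=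
  expR (- expR (- ((x - mu) / sigma))).

Definition is_gumbel {d} {T : measurableType d} {R : realType}
  (P : probability T R) (X : T -> R) (mu sigma : R) : Prop :=
  forall x : R, P (X @^-1` `]-oo, x]) = (gumbel_cdf mu sigma x)%:E.

Definition is_density {d} {T : measurableType d} {R : realType}
  (P : probability T R) (Z : T -> R) (f : R -> R) : Prop :=
  measurable_fun setT f /\ (forall t, 0 <= f t) /\
  forall x : R, P (Z @^-1` `]-oo, x]) =
    (\int[lebesgue_measure]_(t in `]-oo, x]) (f t)%:E)%E.

Definition lr_le {d1 d2} {T1 : measurableType d1} {T2 : measurableType d2}
  {R : realType} (P1 : probability T1 R) (Z1 : T1 -> R)
  (P2 : probability T2 R) (Z2 : T2 -> R) : Prop :=
  exists f1 f2 : R -> R, is_density P1 Z1 f1 /\ is_density P2 Z2 f2 /\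
    (forall x y : R, x <= y -> f2 x / f1 x <= f2 y / f1 y).

Definition maxRV {T : Type} {R : realType} (n : nat) (hn : (0 < n)%N)
  (X : 'I_n -> T -> R) : T -> R :=
  fun t => \big[Num.max/X (Ordinal hn) t]_(i < n) X i t.

From HB Require Import structures.
From mathcomp Require Import all_boot all_order all_algebra.
From mathcomp Require Import all_classical all_reals all_analysis.
From mathcomp Require Import ring lra.
Set Implicit Arguments. Unset Strict Implicit. Unset Printing Implicit Defensive.
Import Order.TTheory GRing.Theory Num.Theory.
Import numFieldNormedType.Exports.
Local Open Scope classical_set_scope.
Local Open Scope ring_scope.

(* With a common scale s, the Gumbel CDF factors as
   F_mu(x) = exp (- e^(mu/s) e^(-x/s)), so the CDF of the maximum of independent
   Gum(mu_i, s) variables, the product of their CDFs, is again of this form: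
   the maximum is Gum(s ln (sum_i e^(mu_i/s)), s), a location nondecreasing in
   each mu_i. For two Gumbel laws of scale s and locations nu <= mu, the density
   ratio f_mu / f_nu = e^((mu - nu)/s) exp ((e^(nu/s) - e^(mu/s)) e^(-x/s)) is
   nondecreasing since e^(-x/s) decreases. *)

Lemma derivable_continuous (R : realType) (f : R -> R) :
  (forall x, derivable f x 1) -> continuous f.
Proof. by move=> df x; apply/differentiable_continuous/derivable1_diffP. Qed.

Lemma ge0_continuous_FTC2Ny (R : realType) (f F : R -> R) (l b : R) :
  (forall x, 0 <= f x) -> continuous f ->
  F x @[x --> -oo] --> l -> (forall x : R, is_derive x (1 : R) F (f x)) ->
  (\int[lebesgue_measure]_(x in `]-oo, b]) (f x)%:E = (F b)%:E - l%:E)%E.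
Proof.
move=> f_ge0 cf Fl dF.
have dFN (x : R) : is_derive x (1 : R) (- (F \o -%R)) (f (- x)).
  by have := is_deriveN (is_derive1_comp (dF (- x)) (is_deriveNid x 1));
    rewrite mulrN1 opprK.
(* reflect x -> -x and apply [ge0_continuous_FTC2y] to the primitive -F(-x) *)
rewrite -[b]opprK ge0_integration_by_substitutionNy; last 2 first.
- exact/continuous_subspaceT.
- by move=> x _; exact: f_ge0.
rewrite (@ge0_continuous_FTC2y _ _ (- (F \o -%R)) _ (- l)).
- by rewrite -!EFinB !fctE !opprK addrC.
- by move=> x _; exact: f_ge0.
- apply/continuous_subspaceT => x.
  by apply: continuous_comp; [exact: continuousN | exact: cf].
- by apply: cvgN; move/cvgNy_compNP: Fl.
- by move=> x _; have [] := dFN x.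
- apply: cvg_at_right_filter.
  by apply: derivable_continuous => x; have [] := dFN x.
- by move=> x _; rewrite derive1E derive_val.
Qed.

Lemma maxRV_preimage_itvNy (T : Type) (R : realType) n (hn : (0 < n)%N)
    (X : 'I_n -> T -> R) (x : R) :
  maxRV hn X @^-1` `]-oo, x] = \bigcap_i X i @^-1` `]-oo, x].
Proof.
apply/seteqP; split => t /=; rewrite in_itv /=.
- by move=> /bigmax_leP[_ Xx] i _ /=; rewrite in_itv /= Xx.
- move=> Xx; apply/bigmax_leP; split => [|i _].
  + by have := Xx (Ordinal hn) I; rewrite /= in_itv.
  + by have := Xx i I; rewrite /= in_itv.
Qed.

Lemma sum_expR_gt0 (R : realType) n (hn : (0 < n)%N) (a : 'I_n -> R) :
  0 < \sum_i expR (a i).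
Proof.
rewrite (bigD1 (Ordinal hn)) //= ltr_pwDl ?expR_gt0 //.
by apply: sumr_ge0 => i _; exact: expR_ge0.
Qed.

Section gumbel.
Variables (R : realType) (s : R).
Hypothesis s_gt0 : 0 < s.

Definition gumbel_pdf (mu x : R) : R :=
  gumbel_cdf mu s x * (expR (- ((x - mu) / s)) / s).

Lemma gumbel_cdfE mu x :
  gumbel_cdf mu s x = expR (- (expR (mu / s) * expR (- (x / s)))).
Proof. by rewrite /gumbel_cdf mulrBl opprB expRD. Qed.

Lemma gumbel_pdf_ge0 mu x : 0 <= gumbel_pdf mu x.
Proof. by rewrite mulr_ge0 ?divr_ge0 ?expR_ge0 ?ltW. Qed.

Lemma is_derive_gumbel_cdf mu x :
  is_derive x (1 : R) (gumbel_cdf mu s) (gumbel_pdf mu x).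
Proof.
rewrite /gumbel_pdf /gumbel_cdf; apply: trigger_derive.
by rewrite scaler0 add0r subr0 /GRing.scale /= mulr1 !mulrN opprK.
Qed.

Lemma continuous_gumbel_pdf mu : continuous (gumbel_pdf mu).
Proof. by apply: derivable_continuous => x; rewrite /gumbel_pdf /gumbel_cdf. Qed.

Lemma gumbel_cdf_cvgNy mu : gumbel_cdf mu s x @[x --> -oo] --> 0.
Proof.
apply/cvgNy_compNP.
have expR_cvgy : expR (- ((- x - mu) / s)) @[x --> +oo] --> +oo.
  apply/cvgryPge => M; near=> x; apply: le_trans (expR_ge1Dx _).
  rewrite -lerBlDl -mulNr ler_pdivlMr //.
  near: x; apply: filterS (nbhs_pinfty_ge (num_real ((M - 1) * s - mu))) => x.
  lra.
exact: (cvg_comp _ _ expR_cvgy (@cvgr_expR R)).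
Unshelve. all: end_near. Qed.

Lemma integral_gumbel_pdf mu x :
  (\int[lebesgue_measure]_(t in `]-oo, x]) (gumbel_pdf mu t)%:E =
   (gumbel_cdf mu s x)%:E)%E.
Proof.
by rewrite (ge0_continuous_FTC2Ny x (@gumbel_pdf_ge0 mu) (@continuous_gumbel_pdf mu)
  (gumbel_cdf_cvgNy mu) (@is_derive_gumbel_cdf mu)) sube0.
Qed.

Lemma is_gumbel_density d (T : measurableType d) (P : probability T R)
    (Z : T -> R) mu :
  is_gumbel P Z mu s -> is_density P Z (gumbel_pdf mu).
Proof.
move=> ZG; split.
  exact: measurable_realfun.continuous_measurable_fun (@continuous_gumbel_pdf mu).
split; first exact: gumbel_pdf_ge0.
by move=> x; rewrite ZG integral_gumbel_pdf.
Qed.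

Lemma gumbel_pdf_ratio mu nu x :
  gumbel_pdf mu x / gumbel_pdf nu x =
  expR (mu / s) / expR (nu / s) *
  expR ((expR (nu / s) - expR (mu / s)) * expR (- (x / s))).
Proof.
rewrite /gumbel_pdf !gumbel_cdfE !mulrBl !opprB !expRD !expRN.
by field; rewrite !gt_eqF ?expR_gt0.
Qed.

Lemma gumbel_pdf_ratio_nondecreasing mu nu : nu <= mu ->
  {homo (fun x => gumbel_pdf mu x / gumbel_pdf nu x) : x y / x <= y}.
Proof.
move=> numu x y xy; rewrite !gumbel_pdf_ratio ler_wpM2l ?divr_ge0 ?expR_ge0 //.
rewrite ler_expR ler_wnM2l // ?subr_le0 ?ler_expR ?ler_pM2r ?invr_gt0 //.
by rewrite lerN2 ler_pM2r ?invr_gt0.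
Qed.

Lemma gumbel_lr_le d1 d2 (T1 : measurableType d1) (T2 : measurableType d2)
    (P1 : probability T1 R) (P2 : probability T2 R) (Z1 : T1 -> R)
    (Z2 : T2 -> R) nu mu :
  nu <= mu -> is_gumbel P1 Z1 nu s -> is_gumbel P2 Z2 mu s ->
  lr_le P1 Z1 P2 Z2.
Proof.
move=> numu Z1G Z2G; exists (gumbel_pdf nu), (gumbel_pdf mu).
split; first exact: is_gumbel_density.
split; first exact: is_gumbel_density.
exact: gumbel_pdf_ratio_nondecreasing.
Qed.

Definition gumbel_max_location n (mu : 'I_n -> R) : R :=
  s * ln (\sum_i expR (mu i / s)).

Lemma is_gumbel_maxRV d (T : measurableType d) (P : probability T R) n
    (hn : (0 < n)%N) (mu : 'I_n -> R) (X : 'I_n -> T -> R) :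
  mutually_independent P X -> (forall i, is_gumbel P (X i) (mu i) s) ->
  is_gumbel P (maxRV hn X) (gumbel_max_location mu) s.
Proof.
move=> Xind XG x.
rewrite maxRV_preimage_itvNy (Xind (fun=> `]-oo, x]%classic)) => [|i]; last first.
  exact: measurable_itv.
under eq_bigr do rewrite XG gumbel_cdfE.
rewrite prodEFin gumbel_cdfE mulrAC divff ?gt_eqF // mul1r.
by rewrite lnK ?posrE ?sum_expR_gt0 // -expR_sum sumrN mulr_suml.
Qed.

Lemma gumbel_max_location_le n (hn : (0 < n)%N) (nu mu : 'I_n -> R) :
  (forall i, nu i <= mu i) -> gumbel_max_location nu <= gumbel_max_location mu.
Proof.
move=> numu; rewrite ler_pM2l // ler_ln ?posrE ?sum_expR_gt0 //.
by apply: ler_sum => i _; rewrite ler_expR ler_pM2r ?invr_gt0.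
Qed.

End gumbel.

Theorem theorem3p1 (R : realType) (d1 d2 : measure_display)
  (T1 : measurableType d1) (T2 : measurableType d2)
  (P1 : probability T1 R) (P2 : probability T2 R)
  (n : nat) (hn : (0 < n)%N) (sigma : R) (hsigma : 0 < sigma)
  (mu mustar : 'I_n -> R)
  (X : 'I_n -> {RV P1 >-> R}) (Y : 'I_n -> {RV P2 >-> R})
  (hXind : mutually_independent P1 (fun i => X i : T1 -> R))
  (hYind : mutually_independent P2 (fun i => Y i : T2 -> R))
  (hX : forall i, is_gumbel P1 (X i) (mu i) sigma)
  (hY : forall i, is_gumbel P2 (Y i) (mustar i) sigma)
  (hmu : forall i, mustar i <= mu i) :
  lr_le P2 (maxRV hn (fun i => Y i : T2 -> R))
        P1 (maxRV hn (fun i => X i : T1 -> R)).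
Proof.
apply: (gumbel_lr_le hsigma (gumbel_max_location_le hsigma hn hmu)).
- exact: is_gumbel_maxRV.
- exact: is_gumbel_maxRV.
Qed.
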